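(* Let $V$ be a simple Yetter-Drinfeld module over $H=B(n,w,\gamma)$ with $\dim_\Bbbk V=p+1$ for some $p\ge0$, and let $v\in V$ be a standard element of type $(\alpha,\beta,x^rg^i)$ with $\alpha,\beta\in\Bbbk^*$, $r,i\in\mathbb{Z}$. If $u$ is any standard element of $V$, then $u=\lambda v$ for some $\lambda\in\Bbbk^*$.
   Context: $\Bbbk$ is an algebraically closed field of characteristic $0$; $n,w$ positive integers, $\gamma$ a primitive $n$-th root of unity. $H=B(n,w,\gamma)$ is the Hopf algebra generated by $x^{\pm1},g,y$ with relations $xx^{-1}=x^{-1}x=1$, $xg=gx$, $xy=yx$, $yg=\gamma gy$, $y^n=1-x^w=1-g^n$, with $\Delta(x)=x\otimes x$, $\Delta(g)=g\otimes g$, $\Delta(y)=y\otimes g+1\otimes y$, $\varepsilon(x)=\varepsilon(g)=1$, $\varepsilon(y)=0$, $S(x)=x^{-1}$, $S(g)=g^{-1}$, $S(y)=-yg^{-1}$; $G(H)=\{g^jx^k\}$. A (left-left) Yetter-Drinfeld module is a left $H$-module, left $H$-comodule $(V,\cdot,\delta)$ with $\delta(h\cdot v)=h_{(1)}v_{(-1)}S(h_{(3)})\otimes h_{(2)}\cdot v_{(0)}$; simple means no nonzero proper Yetter-Drinfeld submodules. A nonzero $v\in V$ is a standard element of type $(\alpha,\beta,h)$ if $h\in G(H)$, $\alpha,\beta\in\Bbbk^*$, $x\cdot v=\alpha v$, $g\cdot v=\beta v$, $\delta(v)=h\otimes v$. *)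

(* The Hopf algebra H = B(n,w,gamma) is encoded through its
   PBW-type basis x^k g^j y^l (k : int, 0 <= j < n, 0 <= l < n); elements of
   H, H(x)H, H(x)H(x)H are formal linear combinations (seq of coefficient *
   basis index), all products being computed literally from the defining
   relations and reduced to this normal form. *)
From HB Require Import structures.
From mathcomp Require Import all_boot all_order all_algebra.
Set Implicit Arguments. Unset Strict Implicit. Unset Printing Implicit Defensive.
Import GRing.Theory.
Local Open Scope ring_scope.

Section Bnwgamma.
Variables (K : fieldType) (n w : nat) (gamma : K).

(* (k, j, l) stands for x^k g^j y^l *)
Definition bas := (int * int * nat)%type.
Definition bas_normal (b : bas) : bool :=
  (0 <= b.1.2) && (b.1.2 < n%:Z) && (b.2 < n)%N.

(* normal form of the grouplike x^k g^i  (uses g^n = x^w) *)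
Definition gl (k i : int) : int * int :=
  (k + (i %/ n%:Z)%Z * w%:Z, (i %% n%:Z)%Z).

Definition lc := seq (K * bas).

(* c x^k g^i y^l, reduced, for l < 2n (uses y^n = 1 - x^w, x central) *)
Definition mono (c : K) (k i : int) (l : nat) : lc :=
  let kj := gl k i in
  if (l < n)%N then [:: (c, (kj, l))]
  else [:: (c, (kj, (l - n)%N)); (- c, ((kj.1 + w%:Z, kj.2), (l - n)%N))].

(* product of two normal basis elements, using y g = gamma g y *)
Definition mulB (b1 b2 : bas) : lc :=
  mono (gamma ^+ (b1.2 * `|b2.1.2|)%N) (b1.1.1 + b2.1.1) (b1.1.2 + b2.1.2)
       (b1.2 + b2.2).

Definition lc_mul (s t : lc) : lc :=
  flatten [seq [seq (p.1 * q.1 * r.1, r.2) | r <- mulB p.2 q.2] | p <- s, q <- t].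
Definition lc_scale (a : K) (s : lc) : lc := [seq (a * p.1, p.2) | p <- s].
Definition lc_basis (b : bas) : lc := [:: (1, b)].
Definition bas1 : bas := ((0, 0), 0%N).
Definition lc_one : lc := lc_basis bas1.
Definition lc_x : lc := mono 1 1 0 0.
Definition lc_xinv : lc := mono 1 (-1) 0 0.
Definition lc_g : lc := mono 1 0 1 0.
Definition lc_ginv : lc := mono 1 0 (-1) 0.
Definition lc_y : lc := mono 1 0 0 1.
Definition lc_pow (s : lc) (m : nat) : lc := iter m (fun t => lc_mul t s) lc_one.
Definition lc_powz (s sinv : lc) (k : int) : lc :=
  match k with Posz m => lc_pow s m | Negz m => lc_pow sinv m.+1 end.

(* antipode: S(x) = x^-1, S(x^-1) = x, S(g) = g^-1, S(y) = - y g^-1,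
   extended as an anti-algebra map to x^k g^j y^l *)
Definition lc_Sy : lc := lc_scale (-1) (lc_mul lc_y lc_ginv).
Definition antipodeB (b : bas) : lc :=
  lc_mul (lc_mul (lc_pow lc_Sy b.2) (lc_powz lc_ginv lc_g b.1.2))
         (lc_powz lc_xinv lc_x b.1.1).

Definition epsB (b : bas) : K := if b.2 == 0%N then 1 else 0.

Definition lc2 := seq (K * (bas * bas)).
Definition lc2_mul (s t : lc2) : lc2 :=
  flatten [seq flatten [seq [seq (p.1 * q.1 * r1.1 * r2.1, (r1.2, r2.2))
                               | r2 <- mulB p.2.2 q.2.2]
                          | r1 <- mulB p.2.1 q.2.1] | p <- s, q <- t].
Definition lc_tens (s t : lc) : lc2 := [seq (a.1 * b.1, (a.2, b.2)) | a <- s, b <- t].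
Definition lc2_one : lc2 := lc_tens lc_one lc_one.
Definition lc2_pow (s : lc2) (m : nat) : lc2 := iter m (fun t => lc2_mul t s) lc2_one.
Definition lc2_powz (s sinv : lc2) (k : int) : lc2 :=
  match k with Posz m => lc2_pow s m | Negz m => lc2_pow sinv m.+1 end.

Definition Delta_x : lc2 := lc_tens lc_x lc_x.
Definition Delta_xinv : lc2 := lc_tens lc_xinv lc_xinv.
Definition Delta_g : lc2 := lc_tens lc_g lc_g.
Definition Delta_ginv : lc2 := lc_tens lc_ginv lc_ginv.
Definition Delta_y : lc2 := lc_tens lc_y lc_g ++ lc_tens lc_one lc_y.
Definition DeltaB (b : bas) : lc2 :=
  lc2_mul (lc2_mul (lc2_powz Delta_x Delta_xinv b.1.1)
                   (lc2_powz Delta_g Delta_ginv b.1.2))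
          (lc2_pow Delta_y b.2).
(* Delta^(2) = (Delta (x) id) o Delta, on the basis; result in H(x)H(x)H *)
Definition Delta2B (b : bas) : seq (K * (bas * bas * bas)) :=
  flatten [seq [seq (p.1 * q.1, (q.2.1, q.2.2, p.2.2)) | q <- DeltaB p.2.1]
          | p <- DeltaB b].

Definition grouplike (b : bas) : bool := bas_normal b && (b.2 == 0%N).

Section YD.
Variable V : vectType K.

(* Data of a left H-module and left H-comodule on V:
   - the module is given by the actions of the generators x, x^-1, g, y
     (H is defined by generators and relations);
   - the coaction is delta(v) = sum_b e_b (x) coact b v, where e_b is the
     basis element with index b and coact b v = 0 for b outside supp. *)
Record YDdata := {
  opX : 'End(V); opXi : 'End(V); opG : 'End(V); opY : 'End(V);
  coact : bas -> 'End(V);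
  supp : seq bas }.

Variable M : YDdata.

Definition iterz (f fi : V -> V) (k : int) (v : V) : V :=
  match k with Posz m => iter m f v | Negz m => iter m.+1 fi v end.

(* action of the basis element x^k g^j y^l (j >= 0) *)
Definition actB (b : bas) (v : V) : V :=
  iterz (opX M) (opXi M) b.1.1 (iter `|b.1.2|%N (opG M) (iter b.2 (opY M) v)).

Definition is_module : Prop :=
  forall v : V,
  [/\ opX M (opXi M v) = v, opXi M (opX M v) = v,
      opX M (opG M v) = opG M (opX M v) & opX M (opY M v) = opY M (opX M v)] /\
  [/\ opY M (opG M v) = gamma *: opG M (opY M v),
      iter n (opY M) v = v - iter w (opX M) v &
      iter n (opG M) v = iter w (opX M) v].

Definition is_comodule : Prop :=
  [/\ uniq (supp M),
      forall b, b \in supp M -> bas_normal b,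
      forall b v, b \notin supp M -> coact M b v = 0,
      (* (eps (x) id) o delta = id *)
      forall v, \sum_(b <- supp M) epsB b *: coact M b v = v &
      (* (Delta (x) id) o delta = (id (x) delta) o delta, compared
         coefficientwise at e_b1 (x) e_b2 *)
      forall v b1 b2,
        \sum_(b <- supp M) \sum_(q <- DeltaB b)
            (if q.2 == (b1, b2) then q.1 else 0) *: coact M b v
        = coact M b2 (coact M b1 v)].

(* delta(h.v) = h1 v(-1) S(h3) (x) h2.v(0), for every basis element h,
   compared coefficientwise at e_b0 *)
Definition is_YD_compatible : Prop :=
  forall (h : bas) (v : V) (b0 : bas), bas_normal h ->
    coact M b0 (actB h v) =
    \sum_(t <- Delta2B h) \sum_(b' <- supp M)
      \sum_(r <- lc_mul (lc_mul (lc_basis t.2.1.1) (lc_basis b')) (antipodeB t.2.2))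
        (if r.2 == b0 then t.1 * r.1 else 0) *: actB t.2.1.2 (coact M b' v).

Definition is_YDmodule : Prop := [/\ is_module, is_comodule & is_YD_compatible].

Definition YD_submodule (U : {vspace V}) : Prop :=
  (forall b u, bas_normal b -> u \in U -> actB b u \in U) /\
  (forall b u, u \in U -> coact M b u \in U).

Definition YD_simple : Prop :=
  {:V}%VS != 0%VS /\
  forall U : {vspace V}, YD_submodule U -> U = 0%VS \/ U = fullv.

Definition standard (v : V) (alpha beta : K) (h : bas) : Prop :=
  [/\ v != 0, grouplike h, alpha != 0 & beta != 0] /\
  [/\ opX M v = alpha *: v, opG M v = beta *: v &
      forall b, coact M b v = (if b == h then v else 0)].

End YD.
End Bnwgamma.

From HB Require Import structures.
From mathcomp Require Import all_boot all_order all_algebra.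
From mathcomp Require Import ring.
Set Implicit Arguments. Unset Strict Implicit. Unset Printing Implicit Defensive.
Import GRing.Theory.
Local Open Scope ring_scope.

(* The vectors y^k v (k < n) span a Yetter-Drinfeld submodule, hence all of V
   by simplicity.  They are g-eigenvectors for the pairwise distinct eigenvalues
   beta gamma^-k, so a standard element u, being a g-eigenvector, is a multiple
   of a single y^l v.  If l > 0 this is impossible.  When beta^n = 1 we get
   y^n v = 0, and v would lie in the span of the y^k u = y^(k+l) v, none of
   which has eigenvalue beta.  When beta^n <> 1, an induction on l through the
   Yetter-Drinfeld condition for y shows that delta(y^l v) has a nonzero
   component e_f (x) v with e_f of y-degree l, whereas delta(u) = h (x) u with h
   grouplike. *)

Section NormalForm.
Variables (K : fieldType) (n w : nat) (gamma : K).

Lemma gl_small k (i : int) : 0 <= i < n%:Z -> gl n w k i = (k, i).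
Proof. by move=> i_small; rewrite /gl divz_small ?modz_small // mul0r addr0. Qed.

Lemma mono_small (c : K) k i l : (l < n)%N ->
  mono n w c k i l = [:: (c, (gl n w k i, l))].
Proof. by move=> ln; rewrite /mono ln. Qed.

Lemma mulB_small (b1 b2 : bas) : (b1.2 + b2.2 < n)%N ->
  mulB n w gamma b1 b2 =
  [:: (gamma ^+ (b1.2 * `|b2.1.2|),
       (gl n w (b1.1.1 + b2.1.1) (b1.1.2 + b2.1.2), (b1.2 + b2.2)%N))].
Proof. exact: mono_small. Qed.

Lemma mulB1l (b : bas) : bas_normal n b -> mulB n w gamma bas1 b = [:: (1, b)].
Proof.
case: b => [[k j] l] /andP[/andP[j_ge0 jn] ln].
by rewrite mulB_small //= gl_small ?add0r ?j_ge0 //= mul0n expr0 add0n.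
Qed.

Lemma mulB1r (b : bas) : bas_normal n b -> mulB n w gamma b bas1 = [:: (1, b)].
Proof.
case: b => [[k j] l] /andP[/andP[j_ge0 jn] ln].
by rewrite mulB_small ?addn0 //= gl_small ?addr0 ?j_ge0 //= muln0 expr0.
Qed.

Definition lc_normal (s : lc K) := all (fun p => bas_normal n p.2) s.
Definition lc2_normal (s : lc2 K) :=
  all (fun p => bas_normal n p.2.1 && bas_normal n p.2.2) s.

Lemma lc_mul1l s : lc_normal s -> lc_mul n w gamma (lc_one K) s = s.
Proof.
elim: s => [|[c b] s IHs] //= /andP[bN sN].
by move: IHs; rewrite /lc_mul /= mulB1l //= mul1r mulr1 => ->.
Qed.

Lemma lc_mul1r s : lc_normal s -> lc_mul n w gamma s (lc_one K) = s.
Proof.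
elim: s => [|[c b] s IHs] //= /andP[bN sN].
by move: IHs; rewrite /lc_mul /= mulB1r //= !mulr1 => ->.
Qed.

Lemma lc2_one_eq : lc2_one K = [:: (1, (bas1, bas1))].
Proof. by rewrite /lc2_one /lc_tens /= mulr1. Qed.

Lemma lc2_mul1l s : lc2_normal s -> lc2_mul n w gamma (lc2_one K) s = s.
Proof.
rewrite lc2_one_eq; elim: s => [|[c [b1 b2]] s IHs] //= /andP[/andP[b1N b2N] sN].
by move: IHs; rewrite /lc2_mul /= mulB1l // mulB1l //= !mul1r !mulr1 => ->.
Qed.

Lemma lc2_mul1r s : lc2_normal s -> lc2_mul n w gamma s (lc2_one K) = s.
Proof.
rewrite lc2_one_eq; elim: s => [|[c [b1 b2]] s IHs] //= /andP[/andP[b1N b2N] sN].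
by move: IHs; rewrite /lc2_mul /= mulB1r // mulB1r //= !mulr1 => ->.
Qed.

Hypothesis n_gt1 : (1 < n)%N.

Let n_gt0 : (0 < n)%N. Proof. exact: ltnW. Qed.

Definition yB : bas := ((0, 0), 1%N).
Definition gB : bas := ((0, 1), 0%N).
Definition ginvB : bas := (gl n w 0 (-1), 0%N).
Definition yginvB : bas := (gl n w 0 (-1), 1%N).

Lemma ginv_exp_small : 0 <= ginvB.1.2 < n%:Z.
Proof. by rewrite /= modz_ge0 ?ltz_pmod ?ltz_nat ?eqz_nat -?lt0n ?n_gt0. Qed.

Lemma bas1_normal : bas_normal n bas1. Proof. by rewrite /bas_normal /= ltz_nat n_gt0. Qed.
Lemma yB_normal : bas_normal n yB. Proof. by rewrite /bas_normal /= ltz_nat n_gt0 n_gt1. Qed.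
Lemma gB_normal : bas_normal n gB. Proof. by rewrite /bas_normal /= ltz_nat n_gt1 n_gt0. Qed.
Lemma ginvB_normal : bas_normal n ginvB.
Proof. by rewrite /bas_normal ginv_exp_small n_gt0. Qed.
Lemma yginvB_normal : bas_normal n yginvB.
Proof. by rewrite /bas_normal ginv_exp_small n_gt1. Qed.

Lemma lc_y_eq : lc_y K n w = [:: (1, yB)].
Proof. by rewrite /lc_y mono_small // gl_small //= ltz_nat n_gt0. Qed.

Lemma lc_g_eq : lc_g K n w = [:: (1, gB)].
Proof. by rewrite /lc_g mono_small // gl_small. Qed.

Lemma lc_ginv_eq : lc_ginv K n w = [:: (1, ginvB)].
Proof. by rewrite /lc_ginv mono_small. Qed.

(* [S(y) = - y g^-1 = - gamma^j g^-1 y], [j] the [g]-exponent of [g^-1] in normal form. *)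
Definition Sy_coef : K := - gamma ^+ `|ginvB.1.2|.

Lemma lc_Sy_eq : lc_Sy n w gamma = [:: (Sy_coef, yginvB)].
Proof.
have /= ginv_small := ginv_exp_small.
rewrite /lc_Sy lc_y_eq lc_ginv_eq /lc_mul /= mulB_small /= ?addn0 //.
by rewrite !add0r gl_small // mul1n !mul1r mulN1r /Sy_coef /yginvB /gl add0r.
Qed.

Lemma antipode_g : antipodeB n w gamma gB = [:: (1, ginvB)].
Proof.
have ginvN : lc_normal [:: (1, ginvB)] by rewrite /= ginvB_normal.
by rewrite /antipodeB /= /lc_pow /= lc_ginv_eq !lc_mul1l // lc_mul1r.
Qed.

Lemma antipode_y : antipodeB n w gamma yB = [:: (Sy_coef, yginvB)].
Proof.
rewrite /antipodeB /= /lc_pow /= lc_Sy_eq.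
by rewrite !(lc_mul1l, lc_mul1r) //= yginvB_normal.
Qed.

Lemma DeltaB_1 : DeltaB n w gamma bas1 = [:: (1, (bas1, bas1))].
Proof.
have oneN : lc2_normal (lc2_one K) by rewrite lc2_one_eq /= bas1_normal.
by rewrite /DeltaB /= !lc2_mul1l // lc2_one_eq.
Qed.

Lemma DeltaB_y : DeltaB n w gamma yB = [:: (1, (yB, gB)); (1, (bas1, yB))].
Proof.
have oneN : lc2_normal (lc2_one K) by rewrite lc2_one_eq /= bas1_normal.
have DyE : Delta_y K n w = [:: (1, (yB, gB)); (1, (bas1, yB))].
  by rewrite /Delta_y lc_y_eq lc_g_eq /lc_tens /lc_one /lc_basis /= !mulr1.
by rewrite /DeltaB /= !lc2_mul1l // DyE //= ?yB_normal ?gB_normal ?bas1_normal.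
Qed.

Lemma Delta2B_y : Delta2B n w gamma yB =
  [:: (1, (yB, gB, gB)); (1, (bas1, yB, gB)); (1, (bas1, bas1, yB))].
Proof. by rewrite /Delta2B DeltaB_y /= DeltaB_y DeltaB_1 /= !mulr1. Qed.

End NormalForm.

Section EigenSpan.
Variables (K : fieldType) (V : vectType K).

Lemma iter_eigen (f : 'End(V)) x a : f x = a *: x ->
  forall k, iter k f x = a ^+ k *: x.
Proof.
by move=> fx; elim=> [|k IHk] /=; rewrite ?scale1r // IHk linearZ /= fx scalerA exprSr.
Qed.

Lemma iter_closed (f : V -> V) (U : {vspace V}) :
  (forall y, y \in U -> f y \in U) -> forall k y, y \in U -> iter k f y \in U.
Proof. by move=> fU; elim=> [|k IHk] y yU //=; apply/fU/IHk. Qed.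

Lemma lfun_span_closed (f : 'End(V)) (X : seq V) (U : {vspace V}) :
  (forall x, x \in X -> f x \in U) -> forall y, y \in <<X>>%VS -> f y \in U.
Proof.
move=> fXU y /(memv_img f); rewrite limg_span; apply: subvP.
by apply/span_subvP => _ /mapP[x xX ->]; apply: fXU.
Qed.

Variable f : 'End(V).

Definition annihilator (s : seq K) : 'End(V) :=
  foldr (fun c P => (f - c *: \1) \o P)%VF \1%VF s.

Lemma annihilator_eigen s u c : f u = c *: u ->
  annihilator s u = (\prod_(m <- s) (c - m)) *: u.
Proof.
move=> fu; elim: s => [|m s IHs] /=; first by rewrite big_nil scale1r id_lfunE.
rewrite comp_lfunE add_lfunE opp_lfunE scale_lfunE id_lfunE IHs linearZ /= fu.
by rewrite big_cons !scalerA -scalerBl mulrC mulrBl.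
Qed.

(* The product of the [f - lam i] with [lam i != c] kills every other component
   of [u] and multiplies [u] by a nonzero scalar. *)
Lemma mem_span_eigen (I : eqType) (e : I -> V) (lam : I -> K) (s : seq I) u c :
  (forall i, f (e i) = lam i *: e i) -> f u = c *: u ->
  u \in <<map e s>>%VS -> u \in <<[seq e i | i <- s & lam i == c]>>%VS.
Proof.
move=> fe fu u_span; set t := [seq lam i | i <- s & lam i != c].
have t_neq0 : \prod_(m <- t) (c - m) != 0.
  rewrite prodf_seq_neq0; apply/allP => m /mapP[i]; rewrite mem_filter.
  by case/andP => lic _ ->; rewrite /= subr_eq0 eq_sym.
have : annihilator t u \in <<[seq e i | i <- s & lam i == c]>>%VS.
  move: u_span; apply: lfun_span_closed => _ /mapP[i i_s ->].
  rewrite (annihilator_eigen _ (fe i)); case: (eqVneq (lam i) c) => lic.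
    by apply: memvZ; apply: memv_span; apply: map_f; rewrite mem_filter lic eqxx.
  rewrite (big_rem (lam i)) /=; last by rewrite map_f // mem_filter lic.
  by rewrite subrr mul0r scale0r mem0v.
rewrite (annihilator_eigen _ fu) => /(memvZ (\prod_(m <- t) (c - m))^-1).
by rewrite scalerA mulVf // scale1r.
Qed.

End EigenSpan.

Section PowersOfY.
Variables (K : fieldType) (n w : nat) (gamma : K).
Variables (V : vectType K) (M : YDdata V).
Hypothesis n_gt0 : (0 < n)%N.
Hypothesis gamma_prim : n.-primitive_root gamma.
Hypothesis modM : is_module n w gamma M.

Definition ypow (x : V) k := iter k (opY M) x.
Definition ypows (x : V) := [seq ypow x k | k <- iota 0 n].

Lemma ypowZ c x k : ypow (c *: x) k = c *: ypow x k.
Proof. by elim: k => [|k IHk] //=; rewrite IHk linearZ. Qed.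

Lemma ypow_ypow x k l : ypow (ypow x l) k = ypow x (k + l).
Proof. by rewrite /ypow iterD. Qed.

Lemma ypow_in_span x k : (k < n)%N -> ypow x k \in <<ypows x>>%VS.
Proof. by move=> kn; apply/memv_span/map_f; rewrite mem_iota. Qed.

Lemma mem_ypows x y : y \in ypows x -> exists2 k, (k < n)%N & y = ypow x k.
Proof. by case/mapP => k; rewrite mem_iota add0n => /andP[_ kn] ->; exists k. Qed.

Lemma opX_ypow x a : opX M x = a *: x -> forall k, opX M (ypow x k) = a *: ypow x k.
Proof.
move=> Xx; elim=> [|k IHk] //=.
by case: (modM (ypow x k)) => [[_ _ _ ->] _]; rewrite IHk linearZ.
Qed.

Lemma opXi_eigen x a : a != 0 -> opX M x = a *: x -> opXi M x = a^-1 *: x.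
Proof.
move=> a_neq0 Xx; case: (modM x) => [[_ XiX _ _] _].
by rewrite -{2}XiX Xx linearZ scalerA mulVf // scale1r.
Qed.

Lemma gamma_neq0 : gamma != 0.
Proof.
apply: contra_eqN (prim_expr_order gamma_prim) => /eqP->.
by rewrite expr0n gtn_eqF // eq_sym oner_eq0.
Qed.

Lemma opG_ypow x b : opG M x = b *: x ->
  forall k, opG M (ypow x k) = (b * gamma^-1 ^+ k) *: ypow x k.
Proof.
move=> Gx; elim=> [|k IHk] /=; first by rewrite mulr1.
case: (modM (ypow x k)) => [_ [YG _ _]].
have -> : opG M (opY M (ypow x k)) = gamma^-1 *: opY M (opG M (ypow x k)).
  by rewrite YG scalerA mulVf ?gamma_neq0 // scale1r.
by rewrite IHk linearZ scalerA exprS mulrCA.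
Qed.

Lemma ypow_n x a : opX M x = a *: x -> ypow x n = (1 - a ^+ w) *: x.
Proof.
move=> Xx; case: (modM x) => [_ [_ Yn _]].
by rewrite /ypow Yn (iter_eigen Xx) scalerBl scale1r.
Qed.

Lemma ypow_ge_n x k : ypow x n = 0 -> (n <= k)%N -> ypow x k = 0.
Proof.
move=> Yn0 nk; rewrite -(subnK nk) /ypow iterD -/(ypow x n) Yn0.
by elim: (k - n)%N => [|j IHj] //=; rewrite IHj linear0.
Qed.

Lemma gammaV_expr_inj b i j : b != 0 -> (i < n)%N -> (j < n)%N ->
  b * gamma^-1 ^+ i = b * gamma^-1 ^+ j -> i = j.
Proof.
move=> b_neq0 ilt jlt; rewrite !exprVn => /(mulfI b_neq0)/invr_inj/eqP.
by rewrite (eq_prim_root_expr gamma_prim) !modn_small // => /eqP.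
Qed.

(* The [y^k x], [k < n], are [g]-eigenvectors with pairwise distinct eigenvalues. *)
Lemma ypows_eigenvector x b u c : b != 0 -> opG M x = b *: x ->
  u \in <<ypows x>>%VS -> opG M u = c *: u -> u != 0 ->
  exists l (d : K), (l < n)%N /\ u = d *: ypow x l.
Proof.
move=> b_neq0 Gx u_span Gu u_neq0.
have := mem_span_eigen (opG_ypow Gx) Gu u_span.
case E: [seq k <- iota 0 n | b * gamma^-1 ^+ k == c] => [|l ks].
  by rewrite span_nil memv0 (negPf u_neq0).
have : l \in [seq k <- iota 0 n | b * gamma^-1 ^+ k == c] by rewrite E mem_head.
rewrite mem_filter mem_iota add0n => /andP[/eqP cl /andP[_ ln]].
have span_sub : (<<[seq ypow x k | k <- iota 0 n & b * gamma^-1 ^+ k == c]>>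
                  <= <[ypow x l]>)%VS.
  apply/span_subvP => y /mapP[k]; rewrite mem_filter mem_iota add0n.
  case/andP=> /eqP ck /andP[_ kn] ->.
  by rewrite (gammaV_expr_inj b_neq0 kn ln) ?ck ?cl // memv_line.
by rewrite -E => /(subvP span_sub)/vlineP[d ->]; exists l, d.
Qed.

Lemma notin_span_ypows_ypow x b l c : x != 0 -> b != 0 -> opG M x = b *: x ->
  ypow x n = 0 -> (0 < l < n)%N -> x \notin <<ypows (c *: ypow x l)>>%VS.
Proof.
move=> x_neq0 b_neq0 Gx Yn0 /andP[l_gt0 ln]; apply/negP.
have -> : ypows (c *: ypow x l) = [seq c *: ypow x (k + l) | k <- iota 0 n].
  by apply: eq_map => k; rewrite ypowZ ypow_ypow.
have Ge k : opG M (c *: ypow x (k + l)) = (b * gamma^-1 ^+ (k + l)) *: (c *: ypow x (k + l)).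
  by rewrite linearZ /= (opG_ypow Gx) !scalerA mulrC.
move=> /(mem_span_eigen Ge Gx); rewrite (_ : <<_>> = 0)%VS ?memv0 ?(negPf x_neq0) //.
apply/eqP; rewrite -subv0; apply/span_subvP => y /mapP[k]; rewrite mem_filter.
case/andP=> /eqP Ek _ ->; case: (ltnP (k + l) n) => [kln|nkl].
  have := gammaV_expr_inj b_neq0 kln n_gt0; rewrite expr0 mulr1 => /(_ Ek).
  by move=> kl0; move: l_gt0; rewrite -kl0 ltnNge leq_addl.
by rewrite ypow_ge_n // scaler0 mem0v.
Qed.

End PowersOfY.

Section SpanOfYPowers.
Variables (K : fieldType) (n w : nat) (gamma : K).
Variables (V : vectType K) (M : YDdata V).
Hypothesis n_gt0 : (0 < n)%N.
Hypothesis gamma_prim : n.-primitive_root gamma.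
Hypothesis modM : is_module n w gamma M.

Lemma actB_closed (U : {vspace V}) :
  (forall y, y \in U -> opX M y \in U) -> (forall y, y \in U -> opXi M y \in U) ->
  (forall y, y \in U -> opG M y \in U) -> (forall y, y \in U -> opY M y \in U) ->
  forall b y, y \in U -> actB M b y \in U.
Proof.
move=> XU XiU GU YU [[k j] l] y yU; rewrite /actB /=.
have GYy : iter `|j| (opG M) (iter l (opY M) y) \in U.
  exact/(iter_closed GU)/(iter_closed YU).
by case: k => k /=; [apply: (iter_closed XU) | apply/XiU/(iter_closed XiU)].
Qed.

Lemma ypows_span_YD_submodule x a b h : is_YD_compatible n w gamma M ->
  a != 0 -> opX M x = a *: x -> opG M x = b *: x ->
  (forall b', coact M b' x = if b' == h then x else 0) ->
  YD_submodule n M <<ypows n M x>>%VS.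
Proof.
move=> YDcomp a_neq0 Xx Gx coact_x; set U := <<ypows n M x>>%VS.
have XU : forall y, y \in U -> opX M y \in U.
  apply: lfun_span_closed => _ /mem_ypows[k kn ->].
  by rewrite (opX_ypow modM Xx) memvZ // ypow_in_span.
have XiU : forall y, y \in U -> opXi M y \in U.
  apply: lfun_span_closed => _ /mem_ypows[k kn ->].
  by rewrite (opXi_eigen modM a_neq0 (opX_ypow modM Xx k)) memvZ // ypow_in_span.
have GU : forall y, y \in U -> opG M y \in U.
  apply: lfun_span_closed => _ /mem_ypows[k kn ->].
  by rewrite (opG_ypow n_gt0 gamma_prim modM Gx) memvZ // ypow_in_span.
have YU : forall y, y \in U -> opY M y \in U.
  apply: lfun_span_closed => _ /mem_ypows[k kn ->].
  rewrite -[opY M _]/(ypow M x k.+1); case: (ltngtP k.+1 n) => [k1n|nk1|->].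
  - exact: ypow_in_span.
  - by move: nk1; rewrite ltnS leqNgt kn.
  - by rewrite (ypow_n modM Xx) memvZ // (ypow_in_span M x n_gt0).
have actU := actB_closed XU XiU GU YU.
split=> [b0 y _|b0]; first exact: actU.
apply: lfun_span_closed => _ /mem_ypows[k kn ->].
rewrite -[ypow M x k]/(actB M ((0, 0), k) x) YDcomp; last first.
  by rewrite /bas_normal /= ltz_nat n_gt0.
do 3!(apply: memv_suml => ? _); apply/memvZ/actU.
by rewrite coact_x; case: ifP => _; rewrite ?mem0v ?(ypow_in_span M x n_gt0).
Qed.

Lemma ypows_span_full x a b h : is_YD_compatible n w gamma M -> YD_simple n M ->
  x != 0 -> a != 0 -> opX M x = a *: x -> opG M x = b *: x ->
  (forall b', coact M b' x = if b' == h then x else 0) ->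
  <<ypows n M x>>%VS = fullv.
Proof.
move=> YDcomp [_ simpleM] x_neq0 a_neq0 Xx Gx coact_x.
case: (simpleM _ (ypows_span_YD_submodule YDcomp a_neq0 Xx Gx coact_x)) => // span0.
by move: (ypow_in_span M x n_gt0); rewrite span0 memv0 (negPf x_neq0).
Qed.

End SpanOfYPowers.

Section CoactionOfY.
Variables (K : fieldType) (n w : nat) (gamma : K).
Hypothesis n_gt1 : (1 < n)%N.

Local Notation ginvB := (ginvB n w).

Definition mul_ginvB (b : bas) : bas :=
  (gl n w (b.1.1 + ginvB.1.1) (b.1.2 + ginvB.1.2), b.2).
Definition mul_yginvB (b : bas) : bas :=
  (gl n w (b.1.1 + ginvB.1.1) (b.1.2 + ginvB.1.2), b.2.+1).

Definition yb_Sg (b : bas) : lc K :=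
  lc_mul n w gamma (lc_mul n w gamma (lc_basis K yB) (lc_basis K b))
         (antipodeB n w gamma gB).
Definition b_Sg (b : bas) : lc K :=
  lc_mul n w gamma (lc_mul n w gamma (lc_basis K bas1) (lc_basis K b))
         (antipodeB n w gamma gB).
Definition b_Sy (b : bas) : lc K :=
  lc_mul n w gamma (lc_mul n w gamma (lc_basis K bas1) (lc_basis K b))
         (antipodeB n w gamma yB).

Lemma yb_Sg_eq b : bas_normal n b -> (b.2.+1 < n)%N ->
  yb_Sg b = [:: (gamma ^+ `|b.1.2| * gamma ^+ (b.2.+1 * `|ginvB.1.2|), mul_yginvB b)].
Proof.
case: b => [[k j] l] /andP[/andP[j_ge0 jn] ln] /= l1n.
rewrite /yb_Sg antipode_g // /lc_mul /lc_basis /= mulB_small //= !add0r gl_small ?j_ge0 //=.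
by rewrite mulB_small //= ?addn0 // !mul1r mulr1 mul1n add1n.
Qed.

Lemma b_Sg_eq b : bas_normal n b ->
  b_Sg b = [:: (gamma ^+ (b.2 * `|ginvB.1.2|), mul_ginvB b)].
Proof.
move=> bN; case: b bN => [[k j] l] bN; have /andP[/andP[_ _] ln] := bN.
rewrite /b_Sg antipode_g // /lc_mul /lc_basis /= mulB1l //=.
by rewrite mulB_small //= ?addn0 // !mul1r.
Qed.

Lemma b_Sy_eq b : bas_normal n b -> (b.2.+1 < n)%N ->
  b_Sy b = [:: (Sy_coef n w gamma * gamma ^+ (b.2 * `|ginvB.1.2|), mul_yginvB b)].
Proof.
move=> bN; case: b bN => [[k j] l] bN /= l1n.
rewrite /b_Sy antipode_y // /lc_mul /lc_basis /= mulB1l //=.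
by rewrite mulB_small //= ?addn1 // !mul1r.
Qed.

Definition lc_coef (s : lc K) (b0 : bas) : K :=
  \sum_(r <- s) (if r.2 == b0 then r.1 else 0).

Lemma lc_coef1 (c : K) b b0 : lc_coef [:: (c, b)] b0 = if b == b0 then c else 0.
Proof. by rewrite /lc_coef big_cons big_nil addr0. Qed.

Variables (V : vectType K) (M : YDdata V).

Lemma sum_lc_coef (s : lc K) b0 (t : K) (z : V) :
  \sum_(r <- s) (if r.2 == b0 then t * r.1 else 0) *: z = (t * lc_coef s b0) *: z.
Proof.
rewrite /lc_coef -scaler_suml mulr_sumr; congr (_ *: _).
by apply: eq_bigr => r _; case: ifP; rewrite ?mulr0.
Qed.

(* [delta(y.z) = y z_(-1) g^-1 (x) g.z_0 + z_(-1) g^-1 (x) y.z_0 + z_(-1) S(y) (x) z_0] *)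
Lemma coact_opY : is_YD_compatible n w gamma M -> forall z b0,
  coact M b0 (opY M z) = \sum_(b <- supp M)
    (lc_coef (yb_Sg b) b0 *: opG M (coact M b z)
     + lc_coef (b_Sg b) b0 *: opY M (coact M b z)
     + lc_coef (b_Sy b) b0 *: coact M b z).
Proof.
move=> YDcomp z b0; have := YDcomp yB z b0 (yB_normal n_gt1).
rewrite /actB /= => ->; rewrite Delta2B_y // !big_cons big_nil addr0 -!big_split /=.
by apply: eq_bigr => b _; rewrite !sum_lc_coef !mul1r addrA.
Qed.

Lemma coact_opY_summand b b0 (c : V) : bas_normal n b -> (b.2.+1 < n)%N ->
  (b.2 < b0.2)%N ->
  lc_coef (yb_Sg b) b0 *: opG M c + lc_coef (b_Sg b) b0 *: opY M c
    + lc_coef (b_Sy b) b0 *: c =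
  if b0 == mul_yginvB b then
    (gamma ^+ `|b.1.2| * gamma ^+ (b.2.+1 * `|ginvB.1.2|)) *: opG M c
    + (Sy_coef n w gamma * gamma ^+ (b.2 * `|ginvB.1.2|)) *: c
  else 0.
Proof.
move=> bN b1n bb0; rewrite yb_Sg_eq ?b_Sg_eq ?b_Sy_eq // !lc_coef1.
have -> : (mul_ginvB b == b0) = false.
  by apply/negP => /eqP eb0; move: bb0; rewrite -eb0 ltnn.
by rewrite scale0r addr0 eq_sym; case: ifP; rewrite ?scale0r ?addr0.
Qed.

End CoactionOfY.

Section TopCoaction.
Variables (K : fieldType) (n w : nat) (gamma : K).
Variables (V : vectType K) (M : YDdata V) (v : V) (beta : K).
Hypothesis n_gt1 : (1 < n)%N.
Hypothesis gamma_n : gamma ^+ n = 1.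
Hypothesis beta_n : beta ^+ n != 1.
Hypothesis Gv : opG M v = beta *: v.
Hypothesis v_neq0 : v != 0.
Hypothesis comodM : is_comodule n w gamma M.
Hypothesis YDcomp : is_YD_compatible n w gamma M.

Lemma gamma_beta_sub_neq0 a b : gamma ^+ a * beta - gamma ^+ b != 0.
Proof.
rewrite subr_eq0; apply: contra beta_n => /eqP/(congr1 (fun t => t ^+ n)).
by rewrite exprMn -!exprM mulnC [(b * n)%N]mulnC !exprM gamma_n !expr1n mul1r => ->.
Qed.

Definition top_coact (m : nat) (z : V) : Prop :=
  exists f (k : K), [/\ k != 0, f.2 = m,
    forall b, (m < b.2)%N -> coact M b z = 0 &
    forall b, b.2 = m -> coact M b z = if b == f then k *: v else 0].

Lemma top_coact_opY m z : (m.+1 < n)%N -> top_coact m z -> top_coact m.+1 (opY M z).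
Proof.
case: comodM => supp_uniq supp_normal coact_out _ _.
move=> m1n [f [k [k_neq0 f2 coact_gt coact_eq]]].
have coact_f : coact M f z = k *: v by rewrite coact_eq // eqxx.
have f_supp : f \in supp M.
  apply: contraT => /(coact_out _ z)/eqP; rewrite coact_f.
  by rewrite scaler_eq0 (negPf k_neq0) (negPf v_neq0).
have fN := supp_normal _ f_supp.
set s := `|(ginvB n w).1.2|%N.
set k' := (gamma ^+ `|f.1.2| * gamma ^+ (m.+1 * s) * beta
           + Sy_coef n w gamma * gamma ^+ (m * s)) * k.
have coact_high b0 : (m < b0.2)%N ->
    coact M b0 (opY M z) = if b0 == mul_yginvB n w f then k' *: v else 0.
  move=> mb0; rewrite (coact_opY n_gt1 YDcomp) (big_rem f) //= big_seq big1 ?addr0.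
    rewrite coact_opY_summand ?f2 // coact_f linearZ /= Gv.
    by case: ifP => // _; rewrite !scalerA -scalerDl /k'; congr (_ *: _); ring.
  move=> b /[dup] b_rem /mem_rem/supp_normal bN.
  have b_neq_f : b != f by apply: contraTneq b_rem => ->; rewrite mem_rem_uniqF.
  case: (ltngtP b.2 m) => [bm|mb|/coact_eq->]; last by rewrite (negPf b_neq_f) !linear0 !addr0.
  - rewrite coact_opY_summand ?(leq_ltn_trans bm (ltnW m1n)) ?(ltn_trans bm mb0) //.
    by case: eqP => // eb0; move: mb0; rewrite eb0 /= ltnS leqNgt bm.
  - by rewrite coact_gt // !linear0 !addr0.
exists (mul_yginvB n w f), k'; split => //.
- rewrite mulf_neq0 // /Sy_coef mulNr -!exprD; exact: gamma_beta_sub_neq0.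
- by rewrite /= f2.
- move=> b mb; rewrite coact_high ?(ltnW mb) //.
  by case: eqP => // eb; move: mb; rewrite eb /= f2 ltnn.
- by move=> b bm; rewrite coact_high // bm.
Qed.

Lemma top_coact_ypow h : h.2 = 0%N ->
  (forall b, coact M b v = if b == h then v else 0) ->
  forall m, (m < n)%N -> top_coact m (ypow M v m).
Proof.
move=> h2 coact_v; elim=> [|m IHm] mn.
  exists h, 1; split; rewrite ?oner_neq0 // => b; rewrite coact_v ?scale1r //.
  by case: eqP => // ->; rewrite h2.
by apply: top_coact_opY => //; apply: IHm; apply: ltnW.
Qed.

End TopCoaction.

Section StandardElements.
Variables (K : fieldType) (n w : nat) (gamma : K).
Variables (V : vectType K) (M : YDdata V).
Hypothesis n_gt0 : (0 < n)%N.
Hypothesis gamma_prim : n.-primitive_root gamma.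
Hypothesis YDM : is_YDmodule n w gamma M.
Hypothesis simpleM : YD_simple n M.

Lemma standard_ypows_span_full x a b h :
  standard n M x a b h -> <<ypows n M x>>%VS = fullv.
Proof.
case: YDM => modM _ YDcomp [[x_neq0 _ a_neq0 _] [Xx Gx coact_x]].
exact: (ypows_span_full n_gt0 gamma_prim modM YDcomp simpleM x_neq0 a_neq0 Xx Gx coact_x).
Qed.

Lemma standard_ypow_multiple v alpha beta h u a b h' :
  standard n M v alpha beta h -> standard n M u a b h' ->
  exists l (d : K), [/\ (l < n)%N, d != 0 & u = d *: ypow M v l].
Proof.
move=> std_v std_u; have [[_ _ _ beta_neq0] [_ Gv _]] := std_v.
have [[u_neq0 _ _ _] [_ Gu _]] := std_u.
have modM : is_module n w gamma M by case: YDM.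
have u_span : u \in <<ypows n M v>>%VS.
  by rewrite (standard_ypows_span_full std_v) memvf.
have [l [d [ln Eu]]] := ypows_eigenvector n_gt0 gamma_prim modM beta_neq0 Gv u_span Gu u_neq0.
exists l, d; split=> //; apply: contra_neq u_neq0 => d0.
by rewrite Eu d0 scale0r.
Qed.

Lemma standard_ypow_n_eq0 v alpha beta h : standard n M v alpha beta h ->
  beta ^+ n = 1 -> ypow M v n = 0.
Proof.
case: YDM => modM _ _ [_ [Xv Gv _]] beta_n; have [_ [_ _ Gn]] := modM v.
rewrite (ypow_n modM Xv) scalerBl scale1r -(iter_eigen Xv) -Gn (iter_eigen Gv).
by rewrite beta_n scale1r subrr.
Qed.

Lemma standard_ypow_deg0 v alpha beta h u a b h' l d :
  standard n M v alpha beta h -> standard n M u a b h' ->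
  (l < n)%N -> d != 0 -> u = d *: ypow M v l -> l = 0%N.
Proof.
move=> std_v std_u ln d_neq0 Eu; case: (posnP l) => // l_gt0; exfalso.
have [[v_neq0 h_gl _ beta_neq0] [_ Gv coact_v]] := std_v.
have [[_ h'_gl _ _] [_ _ coact_u]] := std_u.
case: YDM => modM comodM YDcomp.
case: (eqVneq (beta ^+ n) 1) => beta_n.
  have := notin_span_ypows_ypow n_gt0 gamma_prim modM d v_neq0 beta_neq0 Gv
            (standard_ypow_n_eq0 std_v beta_n).
  by move=> /(_ l); rewrite l_gt0 ln -Eu (standard_ypows_span_full std_u) memvf => /(_ isT).
have n_gt1 : (1 < n)%N by apply: leq_ltn_trans ln.
have h2 : h.2 = 0%N by case/andP: h_gl => _ /eqP.
have [f [k [k_neq0 f2 _ coact_top]]] := top_coact_ypow n_gt1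
  (prim_expr_order gamma_prim) beta_n Gv v_neq0 comodM YDcomp h2 coact_v ln.
have : coact M f u != 0.
  by rewrite Eu linearZ /= coact_top // eqxx !scaler_eq0 negb_or d_neq0 negb_or k_neq0.
rewrite coact_u; case: ifP => [/eqP fh'|_]; last by rewrite eqxx.
by move: h'_gl; rewrite /grouplike -fh' f2 eqn0Ngt l_gt0 andbF.
Qed.

End StandardElements.

Theorem corollary3p20 (K : closedFieldType) (K_char0 : [pchar K] =i pred0)
  (n w : nat) (n_gt0 : (0 < n)%N) (w_gt0 : (0 < w)%N)
  (gamma : K) (gamma_prim : n.-primitive_root gamma)
  (V : vectType K) (M : YDdata V)
  (HYD : is_YDmodule n w gamma M) (Hsimple : YD_simple n M)
  (p : nat) (Hdim : \dim {:V} = p.+1)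
  (v : V) (alpha beta : K) (r i : int)
  (Hv : standard n M v alpha beta (gl n w r i, 0%N)) :
  forall u : V, (exists (a b : K) (h : bas), standard n M u a b h) ->
  exists lambda : K, lambda != 0 /\ u = lambda *: v.
Proof.
move=> u [a [b [h std_u]]].
have [l [d [ln d_neq0 Eu]]] := standard_ypow_multiple n_gt0 gamma_prim HYD Hsimple Hv std_u.
have l0 := standard_ypow_deg0 n_gt0 gamma_prim HYD Hsimple Hv std_u ln d_neq0 Eu.
by exists d; rewrite Eu l0.
Qed.
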